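(* Let $p \geq 2$. Consider parameter tuples $(\pi, \alpha, u_1, \dots, u_p, h)$ where $\pi \in (0,1)$, $\alpha \in \mathbb{R}$, $h$ is a probability density on $\mathbb{R}^p$, and $u_j$ are real functions, such that the following hold. The density $h$ and the density \[ g(\mathbf{x}) = \exp\Big\{\alpha + \sum_{j=1}^p u_j(x_j)\Big\} h(\mathbf{x}) \] share a common compact support $\mathcal{T} = \mathcal{T}_1 \times \cdots \times \mathcal{T}_p$, where $\mathcal{T}_j$ is the support of $u_j$ for $j = 1, \dots, p$. Each $u_j$ satisfies the centering constraint $\int u_j(x_j)\, dx_j = 0$. The normalization $\int \exp\{\alpha + \sum_{j=1}^p u_j(x_j)\} h(\mathbf{x})\, d\mathbf{x} = 1$ holds. Finally, there exist two distinct indices $j, k \in \{1,\dots,p\}$ such that $u_j$ and $u_k$ are both non-constant on their respective supports. Such a tuple generates the labeled-sample density $g$ and the unlabeled-sample density $f = \pi g + (1-\pi) h$. Then the model uniquely determines $(\pi, \alpha, u_1, \dots, u_p)$. That is, if two such tuples generate the same pair $(g, f)$, then they have the same values of $\pi$, $\alpha$, $u_1, \dots, u_p$.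
   Context: Positive-unlabeled (PU) data under the ''selected completely at random'' assumption. The labeled sample $\mathbf{x}_1, \dots, \mathbf{x}_{n_0}$ is drawn from the positive-class density $g(\mathbf{x})$. The unlabeled sample $\mathbf{x}_{n_0+1}, \dots, \mathbf{x}_n$ is drawn from the mixture $\pi g(\mathbf{x}) + (1-\pi) h(\mathbf{x})$, where $h$ is the negative-class density and $\pi \in (0,1)$ is the mixture proportion. The generalized additive exponential tilting (GAET) model assumes \[ \log\{g(\mathbf{x})/h(\mathbf{x})\} = \alpha + \sum_{j=1}^p u_j(x_j), \] where $x_j$ is the $j$-th coordinate of $\mathbf{x} \in \mathbb{R}^p$. Each $u_j$ is an unspecified function satisfying $\int u_j(x_j)\, dx_j = 0$. The constant $\alpha$ ensures $\int \exp\{\alpha + \sum_j u_j(x_j)\} h(\mathbf{x})\, d\mathbf{x} = 1$. *)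

From HB Require Import structures.
From mathcomp Require Import all_boot all_order all_algebra.
From mathcomp Require Import all_classical all_reals all_analysis.
Set Implicit Arguments. Unset Strict Implicit. Unset Printing Implicit Defensive.
Import Order.TTheory GRing.Theory Num.Theory.
Import numFieldNormedType.Exports.
Local Open Scope classical_set_scope.
Local Open Scope ring_scope.

(* Lebesgue integral over R^n (points are n-tuples of reals), defined as the
   iterated Lebesgue integral; for nonnegative measurable integrands this is
   the Lebesgue integral w.r.t. the n-dimensional Lebesgue measure (Tonelli). *)
Fixpoint iint {R : realType} (n : nat) : (n.-tuple R -> \bar R) -> \bar R :=
  match n return (n.-tuple R -> \bar R) -> \bar R with
  | 0 => fun F => F [tuple]
  | n'.+1 => fun F =>
      (\int[@lebesgue_measure R]_(t in [set: R])
          iint (fun x : n'.-tuple R => F [tuple of t :: x]))%E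
  end.

Definition supp {T : Type} {R : realType} (f : T -> R) : set T :=
  [set x | f x != 0].

Definition prod_set {R : realType} (p : nat) (T : 'I_p -> set R) :
  set (p.-tuple R) := [set x | forall j, T j (tnth x j)].

Definition gdens {R : realType} (p : nat) (alpha : R) (u : 'I_p -> R -> R)
  (h : p.-tuple R -> R) (x : p.-tuple R) : R :=
  expR (alpha + \sum_(j < p) u j (tnth x j)) * h x.

Definition fdens {R : realType} (p : nat) (pi alpha : R) (u : 'I_p -> R -> R)
  (h : p.-tuple R -> R) (x : p.-tuple R) : R :=
  pi * gdens alpha u h x + (1 - pi) * h x.

Definition GAET_admissible {R : realType} (p : nat) (pi alpha : R)
  (u : 'I_p -> R -> R) (h : p.-tuple R -> R) : Prop :=
  [/\ 0 < pi < 1,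
      [/\ measurable_fun [set: p.-tuple R] h,
          (forall x, 0 <= h x) &
          iint (fun x => (h x)%:E) = 1%E],
      (forall j, measurable_fun [set: R] (u j)
              /\ (@lebesgue_measure R).-integrable [set: R] (fun t => (u j t)%:E)
              /\ (\int[@lebesgue_measure R]_(t in [set: R]) (u j t)%:E)%E = 0%E),
      iint (fun x => (gdens alpha u h x)%:E) = 1%E &
      exists T : 'I_p -> set R,
        [/\ forall j, compact (T j),
            supp h = prod_set T,
            supp (gdens alpha u h) = prod_set T,
            (forall j, supp (u j) `<=` T j) &
            exists j k : 'I_p, [/\ j != k,
              (exists s t, [/\ T j s, T j t & u j s != u j t]) &
              (exists s t, [/\ T k s, T k t & u k s != u k t])]]].

From HB Require Import structures.
From mathcomp Require Import all_boot all_order all_algebra.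
From mathcomp Require Import all_classical all_reals all_analysis.
From mathcomp Require Import ring lra.
Set Implicit Arguments. Unset Strict Implicit. Unset Printing Implicit Defensive.
Import Order.TTheory GRing.Theory Num.Theory.
Import numFieldNormedType.Exports.
Local Open Scope classical_set_scope.
Local Open Scope ring_scope.

(* Dividing f = pi g + (1 - pi) h by g > 0 on the support gives
   (1 - pi) exp(-s(x)) = f/g - pi with s(x) = alpha + sum_j u_j(x_j).  Comparing two
   parameter tuples, (1 - pi1) e^{-s1} - (1 - pi2) e^{-s2} = pi2 - pi1 on the support.
   Moving only the coordinates j and k, both exponentials are products A(x_j) B(x_k);
   a product with non-constant factors minus a constant is a product again only if the
   constant vanishes, so pi1 = pi2 and then s1 = s2 on the support.  Hence each
   u1_j - u2_j is constant on T_j and zero outside; the centering constraint and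
   |T_j| > 0 (T carries the probability density h) force this constant to be 0. *)

Section set_tnth.
Variables (T : Type) (n : nat).

Definition set_tnth (x : n.-tuple T) (j : 'I_n) (a : T) : n.-tuple T :=
  [tuple if i == j then a else tnth x i | i < n].

Lemma tnth_set_tnth x j a i :
  tnth (set_tnth x j a) i = if i == j then a else tnth x i.
Proof. exact: tnth_mktuple. Qed.

Lemma sum_set_tnth (V : zmodType) (u : 'I_n -> T -> V) x j a :
  \sum_(i < n) u i (tnth (set_tnth x j a) i) =
  \sum_(i < n) u i (tnth x i) + u j a - u j (tnth x j).
Proof.
rewrite (bigD1 j) //= [in RHS](bigD1 j) //= tnth_set_tnth eqxx.
under eq_bigr => i /negbTE ij do rewrite tnth_set_tnth ij.
by rewrite addrAC [u j (tnth x j) + _]addrC addrK addrC.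
Qed.

End set_tnth.

Section prod_set.
Variables (R : realType) (p : nat).
Implicit Types (T : 'I_p -> set R) (x : p.-tuple R).

Lemma prod_set_set_tnth T x j a :
  prod_set T x -> T j a -> prod_set T (set_tnth x j a).
Proof. by move=> Tx Ta i; rewrite tnth_set_tnth; case: eqP => [->|]. Qed.

Lemma prod_set_eq_sub T T' x j :
  prod_set T x -> prod_set T = prod_set T' -> T' j `<=` T j.
Proof.
move=> Tx TT' a T'a.
have : prod_set T' (set_tnth x j a) by apply: prod_set_set_tnth; rewrite // -TT'.
by rewrite -TT' => /(_ j); rewrite tnth_set_tnth eqxx.
Qed.

End prod_set.

Section iint.
Import HBNNSimple.
Local Open Scope ereal_scope.
Variable R : realType.
Let mu := @lebesgue_measure R.

Lemma iint0 n (F : n.-tuple R -> \bar R) : (forall x, F x = 0) -> iint F = 0.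
Proof.
elim: n F => [|n IH] F F0 /=; first exact: F0.
by apply: integral0_eq => t _; apply: IH => x; exact: F0.
Qed.

Lemma iint_ge0 n (F : n.-tuple R -> \bar R) : (forall x, 0 <= F x) -> 0 <= iint F.
Proof.
elim: n F => [|n IH] F F0 /=; first exact: F0.
by apply: integral_ge0 => t _; apply: IH => x; exact: F0.
Qed.

(* No measurability of [f] is needed: a nonnegative simple function below [f]
   also vanishes off [N]. *)
Lemma ge0_integral_null (f : R -> \bar R) (N : set R) :
  measurable N -> mu N = 0 -> (forall t, 0 <= f t) -> (forall t, ~ N t -> f t = 0) ->
  \int[mu]_(t in [set: R]) f t = 0.
Proof.
move=> mN N0 f0 fN; apply/eqP; rewrite eq_le integral_ge0 ?andbT//.
rewrite ge0_integralTE//; apply/ge_ereal_sup => _ [h /= hf <-].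
rewrite -integralT_nnsfun.
have hN t : ~ N t -> (h t)%:E = 0.
  move=> Nt; apply/eqP; rewrite eq_le !lee_fin fun_ge0 andbT -lee_fin.
  by apply: le_trans (hf t) _; rewrite fN.
rewrite (@eq_integral _ _ _ mu _ ((EFin \o h) \_ N)); last first.
  by move=> t _; rewrite /patch; case: ifPn => // /negP; rewrite inE => /hN.
rewrite -integral_mkcond null_set_integral//.
by apply/measurable_realfun.measurable_EFinP; exact: measurable_funTS.
Qed.

Lemma iint_null_coord n (F : n.-tuple R -> \bar R) (j : 'I_n) (N : set R) :
  measurable N -> mu N = 0 -> (forall x, 0 <= F x) ->
  (forall x, ~ N (tnth x j) -> F x = 0) -> iint F = 0.
Proof.
move=> mN N0; elim: n F j => [|n IH] F j; first by case: j.
move=> F0 /=; case: (unliftP ord0 j) => [j'|] -> FN.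
  apply: integral0_eq => t _; apply: (IH _ j') => [x|x Nx]; first exact: F0.
  by apply: FN; rewrite (tnth_nth t) /= -tnth_nth.
apply: (ge0_integral_null mN N0) => [t|t Nt]; first by apply: iint_ge0.
by apply: iint0 => x; apply: FN; rewrite (tnth_nth t).
Qed.

Variables (p : nat) (T : 'I_p -> set R) (F : p.-tuple R -> \bar R).
Hypotheses (F_neq0 : iint F != 0) (F_off : forall x, ~ prod_set T x -> F x = 0).

Lemma iint_supp_nonempty : exists z, prod_set T z.
Proof.
apply: contrapT => noT; move: F_neq0; rewrite iint0 ?eqxx// => x.
by apply: F_off => Tx; apply: noT; exists x.
Qed.

Lemma iint_supp_coord_neq0 j : measurable (T j) -> (forall x, 0 <= F x) ->
  mu (T j) != 0.
Proof.
move=> mT F0; apply/eqP => T0; move: F_neq0.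
rewrite (iint_null_coord (j := j) mT T0 F0) ?eqxx// => x nTx.
by apply: F_off => /(_ j).
Qed.

End iint.

Lemma eq_of_integral_const_shift (R : realType) (f g : R -> R) (A : set R) (D : R) :
  measurable A -> @lebesgue_measure R A != 0%E ->
  (@lebesgue_measure R).-integrable [set: R] (EFin \o f) ->
  (@lebesgue_measure R).-integrable [set: R] (EFin \o g) ->
  (\int[@lebesgue_measure R]_(t in [set: R]) (f t)%:E =
   \int[@lebesgue_measure R]_(t in [set: R]) (g t)%:E)%E ->
  supp f `<=` A -> supp g `<=` A -> (forall a, A a -> f a - g a = D) -> f = g.
Proof.
move=> mA A0 f_int g_int int_eq fA gA fgD.
have off a : ~ A a -> f a = 0 /\ g a = 0.
  by move=> nA; split; apply/eqP; apply: contra_notT nA; [apply: fA|apply: gA].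
have fg_patch a : (f a - g a)%:E = ((cst D%:E) \_ A) a.
  rewrite patchE; case: ifPn => [/set_mem/fgD -> //|/negP].
  by rewrite inE => /off[-> ->]; rewrite subrr.
have : (D%:E * @lebesgue_measure R A = 0)%E.
  rewrite -integral_cst // integral_mkcond.
  under eq_integral do rewrite -fg_patch EFinB.
  by rewrite integralB_EFin // int_eq subee // integrable_fin_num.
move/eqP; rewrite mule_eq0 (negbTE A0) orbF eqe => /eqP D0.
apply/funext => a; have [Aa|/off[-> ->] //] := pselect (A a).
by apply/eqP; rewrite -subr_eq0 fgD // D0.
Qed.

Section gaet.
Variables (R : realType) (p : nat).
Implicit Types (pi alpha : R) (u : 'I_p -> R -> R) (h : p.-tuple R -> R).

Definition log_ratio alpha u (x : p.-tuple R) : R :=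
  alpha + \sum_(j < p) u j (tnth x j).

Lemma log_ratio_set_tnth alpha u x j a :
  log_ratio alpha u (set_tnth x j a) =
  log_ratio alpha u x + u j a - u j (tnth x j).
Proof. by rewrite /log_ratio sum_set_tnth !addrA. Qed.

Lemma fdensE pi alpha u h x :
  fdens pi alpha u h x =
  gdens alpha u h x * (pi + (1 - pi) * expR (- log_ratio alpha u x)).
Proof.
rewrite /fdens /gdens -/(log_ratio alpha u x).
have {2}-> : h x = expR (log_ratio alpha u x) * h x * expR (- log_ratio alpha u x).
  by rewrite mulrAC -expRD subrr expR0 mul1r.
ring.
Qed.

Lemma mixture_relation pi1 alpha1 u1 h1 pi2 alpha2 u2 h2 x : h1 x != 0 ->
  gdens alpha1 u1 h1 = gdens alpha2 u2 h2 ->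
  fdens pi1 alpha1 u1 h1 = fdens pi2 alpha2 u2 h2 ->
  (1 - pi1) * expR (- log_ratio alpha1 u1 x)
    - (1 - pi2) * expR (- log_ratio alpha2 u2 x) = pi2 - pi1.
Proof.
move=> h1x g_eq /(congr1 (@^~ x)); rewrite !fdensE -g_eq => /mulfI.
have -> : gdens alpha1 u1 h1 x != 0 by rewrite mulf_neq0 // gt_eqF // expR_gt0.
by move=> /(_ isT); lra.
Qed.

End gaet.

(* [(a, b) |-> K A a B b - c] is of rank one, so its 2x2 minor on [{s,t} x {s',t'}]
   vanishes; that minor is [c K (A s - A t) (B s' - B t')]. *)
Lemma separable_shift_eq0 (R : idomainType) (I J : Type) (S : set I) (S' : set J)
    (K L c : R) (A A' : I -> R) (B B' : J -> R) s t s' t' :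
  S s -> S t -> S' s' -> S' t' -> K != 0 -> A s != A t -> B s' != B t' ->
  (forall a b, S a -> S' b -> K * A a * B b - L * A' a * B' b = c) -> c = 0.
Proof.
move=> Ss St Ss' St' K0 Ast Bst sep.
have prod a b : S a -> S' b -> K * A a * B b - c = L * A' a * B' b.
  by move=> Sa Sb; rewrite -(sep a b Sa Sb); ring.
have : c * K * (A s - A t) * (B s' - B t') = 0.
  transitivity ((K * A s * B t' - c) * (K * A t * B s' - c)
                - (K * A s * B s' - c) * (K * A t * B t' - c)); first by ring.
  by rewrite !prod //; ring.
move/eqP; rewrite !mulf_eq0 !subr_eq0 (negbTE K0) (negbTE Ast) (negbTE Bst).
by rewrite !orbF => /eqP.
Qed.

Section identifiability.
Variables (R : realType) (p : nat) (T : 'I_p -> set R) (z : p.-tuple R).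
Hypothesis Tz : prod_set T z.

Lemma mixture_weight_eq (j k : 'I_p) pi1 alpha1 u1 pi2 alpha2 u2 :
  j != k -> pi1 < 1 ->
  (exists s t, [/\ T j s, T j t & u1 j s != u1 j t]) ->
  (exists s t, [/\ T k s, T k t & u1 k s != u1 k t]) ->
  (forall x, prod_set T x ->
     (1 - pi1) * expR (- log_ratio alpha1 u1 x)
       - (1 - pi2) * expR (- log_ratio alpha2 u2 x) = pi2 - pi1) ->
  pi1 = pi2.
Proof.
move=> jk pi1_lt1 [s [t [Tjs Tjt ust]]] [s' [t' [Tks' Tkt' ust']]] rel.
have exp_split l a b c d :
    expR (- (l + a - c + b - d)) = expR (- (l - c - d)) * expR (- a) * expR (- b).
  by rewrite -!expRD; congr expR; ring.
have expN_neq a b : a != b -> expR (- a) != expR (- b) :> R.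
  by apply: contra_neq => /expR_inj /oppr_inj.
suff : pi2 - pi1 = 0 by move/eqP; rewrite subr_eq0 => /eqP.
pose offset alpha u := log_ratio alpha u z - u j (tnth z j) - u k (tnth z k).
apply: (@separable_shift_eq0 _ _ _ _ _
  ((1 - pi1) * expR (- offset alpha1 u1)) ((1 - pi2) * expR (- offset alpha2 u2)) _
  (fun a => expR (- u1 j a)) (fun a => expR (- u2 j a))
  (fun b => expR (- u1 k b)) (fun b => expR (- u2 k b)) _ _ _ _ Tjs Tjt Tks' Tkt').
- by rewrite mulf_neq0 // gt_eqF // ?expR_gt0 ?subr_gt0.
- exact: expN_neq.
- exact: expN_neq.
move=> a b Ta Tb; rewrite -(rel (set_tnth (set_tnth z j a) k b)); last first.
  by apply: prod_set_set_tnth => //; apply: prod_set_set_tnth.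
rewrite !log_ratio_set_tnth !tnth_set_tnth eq_sym (negbTE jk) !exp_split.
by rewrite !mulrA.
Qed.

Lemma log_ratio_eq_shift alpha1 u1 alpha2 u2 j a :
  (forall x, prod_set T x -> log_ratio alpha1 u1 x = log_ratio alpha2 u2 x) ->
  T j a -> u1 j a - u2 j a = u1 j (tnth z j) - u2 j (tnth z j).
Proof.
move=> lr_eq Ta; have := lr_eq _ (prod_set_set_tnth Tz Ta).
by rewrite !log_ratio_set_tnth (lr_eq z Tz); lra.
Qed.

End identifiability.

Theorem theorem1 (R : realType) (p : nat) (hp : (2 <= p)%N)
  (pi1 alpha1 : R) (u1 : 'I_p -> R -> R) (h1 : p.-tuple R -> R)
  (pi2 alpha2 : R) (u2 : 'I_p -> R -> R) (h2 : p.-tuple R -> R) :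
  GAET_admissible pi1 alpha1 u1 h1 ->
  GAET_admissible pi2 alpha2 u2 h2 ->
  gdens alpha1 u1 h1 = gdens alpha2 u2 h2 ->
  fdens pi1 alpha1 u1 h1 = fdens pi2 alpha2 u2 h2 ->
  [/\ pi1 = pi2, alpha1 = alpha2 & forall j, u1 j = u2 j].
Proof.
move=> [/andP[_ pi1_lt1] [_ h1_ge0 h1_int] u1_int _
        [T [T_compact supp_h1 supp_g1 supp_u1 [j [k [jk u1j_nc u1k_nc]]]]]].
move=> [_ _ u2_int _ [T2 [_ _ supp_g2 supp_u2 _]]] g_eq f_eq.
have h1_neq0 x : prod_set T x -> h1 x != 0 by rewrite -supp_h1.
have h1_off x : ~ prod_set T x -> (h1 x)%:E = 0%E.
  by rewrite -supp_h1 => /negP; rewrite negbK => /eqP ->.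
have h1E_ge0 x : (0 <= (h1 x)%:E)%E by rewrite lee_fin h1_ge0.
have h1_int_neq0 : iint (fun x => (h1 x)%:E) != 0%E by rewrite h1_int.
have T_meas i : measurable (T i).
  apply: measurable_realfun.closed_measurable.
  exact: compact_closed (@Rhausdorff R) (T_compact i).
have [z Tz] := iint_supp_nonempty h1_int_neq0 h1_off.
have T2_sub i : T2 i `<=` T i.
  by apply: (prod_set_eq_sub Tz); rewrite -supp_g1 -supp_g2 g_eq.
have rel x (Tx : prod_set T x) := mixture_relation (h1_neq0 x Tx) g_eq f_eq.
have pi_eq := mixture_weight_eq Tz jk pi1_lt1 u1j_nc u1k_nc rel.
have lr_eq x : prod_set T x -> log_ratio alpha1 u1 x = log_ratio alpha2 u2 x.
  move=> Tx; move: (rel x Tx); rewrite -pi_eq subrr -mulrBr => /eqP.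
  by rewrite mulf_eq0 subr_eq0 gt_eqF //= subr_eq0 => /eqP/expR_inj/oppr_inj.
have u_eq i : u1 i = u2 i.
  have [_ [u1i_int u1i_0]] := u1_int i; have [_ [u2i_int u2i_0]] := u2_int i.
  apply: (eq_of_integral_const_shift (T_meas i)
    (iint_supp_coord_neq0 h1_int_neq0 h1_off (T_meas i) h1E_ge0) u1i_int u2i_int).
  - by rewrite u1i_0 u2i_0.
  - exact: supp_u1.
  - by move=> a /supp_u2 /T2_sub.
  - by move=> a; apply: (log_ratio_eq_shift Tz lr_eq).
split => //; have := lr_eq z Tz; rewrite /log_ratio.
by under eq_bigr do rewrite u_eq; move/addIr.
Qed.
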